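(* If $g\in\mathcal{G}$ is $\mathbb{S}$-nearly periodic, then for every $\delta>0$ there exists an $\mathbb{S}$-normal function $h\in\mathcal{G}$ that is not 1-pass tractable and satisfies $\Theta(g,h)\le\delta$.
   Context: Streams: a stream of length $m$ with domain $[n]$ is a list $D=\langle (i_1,\delta_1),\dots,(i_m,\delta_m)\rangle$ with $i_j\in[n]$, $\delta_j\in\mathbb{Z}$; its frequency vector $V(D)=v\in\mathbb{Z}^n$ has $v_i=\sum_{j:i_j=i}\delta_j$. (Turnstile model) there is $M\in\mathbb{N}$ such that the frequency vector of $D$ and of every prefix of $D$ lies in $\{-M,\dots,M\}^n$; throughout $M$ is polynomial in $n$. $\mathcal{D}(n,m)$ is the set of such streams with domain $[n]$ and length at most $m$. A $p$-pass algorithm reads the stream $p$ times in order and may use randomness. For $g:\mathbb{Z}_{\ge0}\to\mathbb{R}$ and $v\in\mathbb{Z}^n$ let $g(v)=\sum_{i=1}^n g(|v_i|)$. The problem $(g,\epsilon)$-SUM is to output $\hat G$ with $P\big((1-\epsilon)g(V(D))\le \hat G\le (1+\epsilon)g(V(D))\big)\ge 2/3$. A function $f:\mathbb{R}_{\ge0}\to\mathbb{R}_{\ge0}$ is sub-polynomial if for every $\alpha>0$, $\lim_{x\to\infty}x^\alpha f(x)=\infty$ and $\lim_{x\to\infty}x^{-\alpha}f(x)=0$. $g$ is $p$-pass tractable if for every sub-polynomial $h$ and every $\epsilon\ge 1/h(nM)$ there exist a sub-polynomial $h^*$ and a $p$-pass algorithm (with oracle access to $g$) that solves $(g,\epsilon)$-SUM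 for all streams in $\mathcal{D}(n,m)$ and all $n,M\ge1$ using at most $h^*(nM)$ bits of space in the worst case. $\mathcal{G}=\{g:\mathbb{Z}_{\ge0}\to\mathbb{R}: g(0)=0,\ g(1)=1,\ g(x)>0\ \forall x>0\}$. For $g,h\in\mathcal{G}$, $\Theta(g,h)=\sup_{x\in\mathbb{N}}|\log g(x)-\log h(x)|$. For a set $\mathcal{S}$ of functions, $g$ is $\mathcal{S}$-nearly periodic if (1) there is $\alpha>0$ such that for every $N>0$ there exist $x,y\in\mathbb{N}$, $x<y$, $y\ge N$ with $g(y)\le g(x)/y^\alpha$ (such $y$ is called an $\alpha$-period of $g$); and (2) for every $\alpha>0$ and every $h\in\mathcal{S}$ there is $N_1>0$ such that for all $\alpha$-periods $y\ge N_1$ and all $x<y$ with $g(y)y^\alpha\le g(x)$, $|g(x+y)-g(x)|\le \min\{g(x),g(x+y)\}h(y)$. $g$ is $\mathcal{S}$-normal if it is not $\mathcal{S}$-nearly periodic. $\mathbb{S}$ denotes the set of non-increasing sub-polynomial functions on $\mathbb{Z}_{\ge0}$. *)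

From Stdlib Require Import Reals.
From mathcomp Require Import all_boot all_algebra.
Unset Printing Implicit Defensive.

Local Open Scope R_scope.

Definition inG (g : nat -> R) : Prop :=
  g 0%N = 0 /\ g 1%N = 1 /\ forall x : nat, (0 < x)%N -> 0 < g x.

(* Theta(g,h) = sup_{x in N} |log g x - log h x| <= delta,
   i.e. every term of the supremum is <= delta (N = positive integers,
   log g 0 being undefined). *)
Definition Theta_le (g h : nat -> R) (delta : R) : Prop :=
  forall x : nat, (0 < x)%N -> Rabs (ln (g x) - ln (h x)) <= delta.

Definition subpolyR (f : R -> R) : Prop :=
  (forall x, 0 <= x -> 0 <= f x) /\
  forall alpha, 0 < alpha ->
    (forall B, exists X, forall x, X <= x -> 0 < x -> B <= Rpower x alpha * f x) /\
    (forall eps, 0 < eps -> exists X, forall x, X <= x -> 0 < x ->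
        Rabs (Rpower x (- alpha) * f x) < eps).

Definition subpolyN (f : nat -> R) : Prop :=
  (forall x, 0 <= f x) /\
  forall alpha, 0 < alpha ->
    (forall B, exists X : nat, forall x : nat, (X <= x)%N -> (0 < x)%N ->
        B <= Rpower (INR x) alpha * f x) /\
    (forall eps, 0 < eps -> exists X : nat, forall x : nat, (X <= x)%N -> (0 < x)%N ->
        Rabs (Rpower (INR x) (- alpha) * f x) < eps).

Definition bbS (f : nat -> R) : Prop :=
  subpolyN f /\ forall x y : nat, (x <= y)%N -> f y <= f x.

Definition is_period (g : nat -> R) (alpha : R) (y : nat) : Prop :=
  exists x : nat, (x < y)%N /\ g y <= g x / Rpower (INR y) alpha.

Definition nearly_periodic (S : (nat -> R) -> Prop) (g : nat -> R) : Prop :=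
  (exists alpha, 0 < alpha /\
     forall N, 0 < N -> exists x y : nat, (x < y)%N /\ N <= INR y /\
        g y <= g x / Rpower (INR y) alpha) /\
  (forall alpha, 0 < alpha -> forall h, S h ->
     exists N1, 0 < N1 /\
       forall y : nat, is_period g alpha y -> N1 <= INR y ->
       forall x : nat, (x < y)%N -> g y * Rpower (INR y) alpha <= g x ->
         Rabs (g (x + y)%N - g x) <= Rmin (g x) (g (x + y)%N) * h y).

Definition normal (S : (nat -> R) -> Prop) (g : nat -> R) : Prop :=
  ~ nearly_periodic S g.

Definition update (n : nat) := ('I_n * int)%type.

Definition freq {n : nat} (D : seq (update n)) (i : 'I_n) : int :=
  (\sum_(u <- D | u.1 == i) u.2)%R.

Definition turnstile (M : nat) {n : nat} (D : seq (update n)) : Prop :=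
  forall k : nat, (k <= size D)%N -> forall i : 'I_n,
    (absz (freq (take k D) i) <= M)%N.

Definition gsum {n : nat} (g : nat -> R) (v : 'I_n -> int) : R :=
  \big[Rplus/0]_(i < n) g (absz (v i)).

(* Randomness: a public random seed
   drawn from an arbitrary finite distribution (not charged to space), plus
   probabilistic transitions.  The transition may depend on the pass index.
   (This model is at least as strong as the usual ones.) *)
Record algorithm (n s : nat) := Algorithm {
  seed : finType;
  seed_w : seed -> R;
  init : seed -> 'I_(2 ^ s) -> R;
  trans : seed -> nat -> 'I_(2 ^ s) -> update n -> 'I_(2 ^ s) -> R;
  output : seed -> 'I_(2 ^ s) -> R
}.
Arguments seed {n s} a : rename.
Arguments seed_w {n s} a _ : rename.
Arguments init {n s} a _ _ : rename.
Arguments trans {n s} a _ _ _ _ _ : rename.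
Arguments output {n s} a _ _ : rename.

Definition valid_alg {n s : nat} (A : algorithm n s) : Prop :=
  (forall w, 0 <= seed_w A w) /\ \big[Rplus/0]_(w : seed A) seed_w A w = 1 /\
  forall w,
    (forall x, 0 <= init A w x) /\ \big[Rplus/0]_(x : 'I_(2 ^ s)) init A w x = 1 /\
    forall k x u, (forall y, 0 <= trans A w k x u y) /\
                  \big[Rplus/0]_(y : 'I_(2 ^ s)) trans A w k x u y = 1.

Definition run_pass {n s : nat} (A : algorithm n s) (w : seed A) (k : nat)
    (d : 'I_(2 ^ s) -> R) (D : seq (update n)) : 'I_(2 ^ s) -> R :=
  foldl (fun d u => fun y => \big[Rplus/0]_(x : 'I_(2 ^ s)) (d x * trans A w k x u y))
        d D.

Definition run {n s : nat} (A : algorithm n s) (w : seed A) (p : nat)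
    (D : seq (update n)) : 'I_(2 ^ s) -> R :=
  foldl (fun d k => run_pass A w k d D) (init A w) (iota 0 p).

Definition prob_out_in {n s : nat} (A : algorithm n s) (p : nat)
    (D : seq (update n)) (lo hi : R) : R :=
  \big[Rplus/0]_(w : seed A) (seed_w A w *
     \big[Rplus/0]_(x : 'I_(2 ^ s))
        (run A w p D x *
         (if Rle_dec lo (output A w x) then
            if Rle_dec (output A w x) hi then 1 else 0 else 0))).

Definition solves_SUM {n s : nat} (A : algorithm n s) (p : nat)
    (g : nat -> R) (eps : R) (M : nat) : Prop :=
  forall D : seq (update n), turnstile M D ->
    2 / 3 <= prob_out_in A p D ((1 - eps) * gsum g (freq D))
                               ((1 + eps) * gsum g (freq D)).

Definition tractable (p : nat) (g : nat -> R) : Prop :=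
  forall h : R -> R, subpolyR h ->
  forall eps : nat -> nat -> R,
    (forall n M : nat, (1 <= n)%N -> (1 <= M)%N -> eps n M >= / h (INR (n * M))) ->
  exists hstar : R -> R, subpolyR hstar /\
    forall n M : nat, (1 <= n)%N -> (1 <= M)%N ->
      exists s : nat, INR s <= hstar (INR (n * M)) /\
      exists A : algorithm n s, valid_alg A /\ solves_SUM A p g (eps n M) M.

From HB Require Import structures.
From Stdlib Require Import Reals Lra Lia ZArith ClassicalEpsilon.
From mathcomp Require Import all_boot all_algebra zify.
Import GRing.Theory Num.Theory.

(* The first condition of near periodicity gives pairs x < y, with y arbitrarily
   large, such that g(y) y^al <= g(x).  Choose such pairs (x_k, y_k) with
   y_(k+1) > z_k := x_k + y_k and multiply g by e^delta at some of the points z_k,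
   chosen so that h(z_k) and h(x_k) differ by a factor at least e^(delta/4).  Then
   Theta(g, h) <= delta, h still drops by the factor y_k^al from x_k to y_k, and
   it jumps between x_k and z_k.

   A jump by 1 + th at an al-period contradicts the second condition of near
   periodicity for the constant function th/2 of S, so h is normal.

   The jumps also encode INDEX: write y on the coordinates j with a_j = 1 of
   [m], m ~ eps y^al, then x on coordinate i.  Since m h(y) <= eps h(x), h(V(D))
   is h(x + a_i y) up to a factor 1 + eps, so a (1 +- eps)-approximation reveals
   a_i.  A one-pass algorithm is thus a one-way protocol for INDEX, which needs
   m / 90 bits; this is polynomial in n M, so h is not 1-pass tractable. *)

Local Open Scope R_scope.

Lemma Rplus_associative : associative Rplus.
Proof. by move=> x y z; rewrite Rplus_assoc. Qed.

Lemma Rmult_associative : associative Rmult.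
Proof. by move=> x y z; rewrite Rmult_assoc. Qed.

HB.instance Definition _ :=
  Monoid.isComLaw.Build R 0 Rplus Rplus_associative Rplus_comm Rplus_0_l.
HB.instance Definition _ :=
  Monoid.isComLaw.Build R 1 Rmult Rmult_associative Rmult_comm Rmult_1_l.
HB.instance Definition _ := Monoid.isMulLaw.Build R 0 Rmult Rmult_0_l Rmult_0_r.
HB.instance Definition _ :=
  Monoid.isAddLaw.Build R Rmult Rplus Rmult_plus_distr_r Rmult_plus_distr_l.

Section RealBigops.
Variables (I : Type) (r : seq I) (P : pred I).

Lemma sumR_le (F G : I -> R) :
  (forall i, P i -> F i <= G i) ->
  \big[Rplus/0]_(i <- r | P i) F i <= \big[Rplus/0]_(i <- r | P i) G i.
Proof.
move=> FG; elim/big_ind2: _ => //; first lra.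
by move=> *; apply: Rplus_le_compat.
Qed.

Lemma sumR_ge0 (F : I -> R) :
  (forall i, P i -> 0 <= F i) -> 0 <= \big[Rplus/0]_(i <- r | P i) F i.
Proof.
move=> F0; elim/big_ind: _ => //; first lra.
by move=> *; apply: Rplus_le_le_0_compat.
Qed.

Lemma prodR_ge0_le (F G : I -> R) :
  (forall i, P i -> 0 <= F i <= G i) ->
  0 <= \big[Rmult/1]_(i <- r | P i) F i <= \big[Rmult/1]_(i <- r | P i) G i.
Proof.
move=> FG; elim/big_ind2: _ => //; first lra.
move=> x1 x2 y1 y2 [h1 h2] [h3 h4]; split; first nra.
exact: Rmult_le_compat.
Qed.

Lemma prodR_le (F G : I -> R) :
  (forall i, P i -> 0 <= F i <= G i) ->
  \big[Rmult/1]_(i <- r | P i) F i <= \big[Rmult/1]_(i <- r | P i) G i.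
Proof. by move/prodR_ge0_le => []. Qed.

Lemma prodR_ge0 (F : I -> R) :
  (forall i, P i -> 0 <= F i) -> 0 <= \big[Rmult/1]_(i <- r | P i) F i.
Proof. by move=> F0; case: (@prodR_ge0_le F F) => // i /F0; lra. Qed.

Lemma exp_sumR (F : I -> R) :
  exp (\big[Rplus/0]_(i <- r | P i) F i) = \big[Rmult/1]_(i <- r | P i) exp (F i).
Proof.
elim/big_rec2: _ => [|i y1 y2 _ <-]; first by rewrite exp_0.
by rewrite exp_plus.
Qed.

End RealBigops.

Lemma sumR_const (T : finType) (c : R) : \big[Rplus/0]_(i : T) c = INR #|T| * c.
Proof.
rewrite big_const; elim: #|T| => [|n IH]; first by rewrite /=; lra.
by rewrite iterS IH S_INR; lra.
Qed.

Lemma prodR_const_ord (m : nat) (c : R) : \big[Rmult/1]_(i < m) c = c ^ m.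
Proof. by rewrite big_const card_ord; elim: m => //= m ->. Qed.

Lemma exists_argmaxR {T : finType} (x0 : T) (F : T -> R) :
  exists x, forall y, F y <= F x.
Proof.
suff [x Fx] : exists x, forall y, y \in enum T -> F y <= F x.
  by exists x => y; apply: Fx; rewrite mem_enum.
elim: (enum T) => [|a s [x Fx]]; first by exists x0.
have [Fax|Fxa] := Rle_lt_dec (F a) (F x).
  by exists x => y; rewrite inE => /orP[/eqP ->|/Fx].
by exists a => y; rewrite inE => /orP[/eqP ->|/Fx]; lra.
Qed.

Lemma avgR_le_max {T : finType} {d F : T -> R} {x : T} :
  (forall y, 0 <= d y) -> \big[Rplus/0]_y d y = 1 -> (forall y, F y <= F x) ->
  \big[Rplus/0]_y (d y * F y) <= F x.
Proof.
move=> d0 d1 Fx.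
apply: (@Rle_trans _ (\big[Rplus/0]_y (d y * F x))).
  by apply: sumR_le => y _; apply: Rmult_le_compat_l.
by rewrite -big_distrl /= d1; lra.
Qed.

Lemma ln_le {x y} : 0 < x -> x <= y -> ln x <= ln y.
Proof. by move=> x0 [xy|->]; [apply/Rlt_le/ln_increasing | lra]. Qed.

Lemma exp_le {x y} : x <= y -> exp x <= exp y.
Proof. by move=> [xy|->]; [apply/Rlt_le/exp_increasing | lra]. Qed.

Lemma Rpower_gt0 x y : 0 < Rpower x y.
Proof. exact: exp_pos. Qed.

Lemma INR_expn (b n : nat) : INR (b ^ n) = INR b ^ n.
Proof. by elim: n => // n IH; rewrite expnS mult_INR IH. Qed.

(** * A one-way lower bound for INDEX *)

Lemma exp_le_1_plus (c : R) : 0 <= c <= 1 -> exp (c / 6) <= 1 + c / 5.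
Proof.
move=> c01; have := exp_ineq1_le (- (c / 6)).
have : exp (c / 6) * exp (- (c / 6)) = 1 by rewrite -exp_plus Rplus_opp_r exp_0.
have := exp_pos (c / 6); nra.
Qed.

Section IndexFixedCoin.
Variables (X : finType) (m : nat).
Local Notation bits := {ffun 'I_m -> bool}.
Variables (d : bits -> X -> R) (C : X -> 'I_m -> bool -> R).
Hypotheses (d_ge0 : forall a x, 0 <= d a x) (d_sum1 : forall a, \big[Rplus/0]_x d a x = 1)
  (C_ge0 : forall x i b, 0 <= C x i b) (C_sum_le1 : forall x i, C x i true + C x i false <= 1).

Definition index_score (a : bits) :=
  \big[Rplus/0]_x (d a x * \big[Rplus/0]_(i < m) C x i (a i)).

Let C_le1 x i b : 0 <= C x i b <= 1.
Proof.
by have := C_sum_le1 x i; have := C_ge0 x i true; have := C_ge0 x i false; case: b; lra.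
Qed.

Lemma exp_index_score_le a :
  exp (index_score a / 6) <= \big[Rplus/0]_x \big[Rmult/1]_(i < m) (1 + C x i (a i) / 5).
Proof.
pose F x := \big[Rplus/0]_(i < m) C x i (a i).
have [x0 _] : exists x0 : X, true.
  case: (pickP (fun _ : X => true)) => [x _|X0]; first by exists x.
  by have := d_sum1 a; rewrite big_pred0 //; lra.
have [xa Fxa] := exists_argmaxR x0 F.
apply: (@Rle_trans _ (exp (F xa / 6))).
  by apply: exp_le; have := avgR_le_max (d_ge0 a) (d_sum1 a) Fxa; rewrite /F /index_score; lra.
apply: (@Rle_trans _ (\big[Rmult/1]_(i < m) (1 + C xa i (a i) / 5))).
  rewrite /F /Rdiv big_distrl /= exp_sumR; apply: prodR_le => i _.
  by split; [exact/Rlt_le/exp_pos | apply/exp_le_1_plus/C_le1].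
rewrite (bigD1 xa) //= -[X in X <= _]Rplus_0_r; apply: Rplus_le_compat_l.
apply: sumR_ge0 => x _; apply: prodR_ge0 => i _.
by have := C_le1 x i (a i); lra.
Qed.

Lemma sum_index_bonus_le :
  \big[Rplus/0]_(a : bits) \big[Rplus/0]_x \big[Rmult/1]_(i < m) (1 + C x i (a i) / 5)
  <= INR #|X| * (11 / 5) ^ m.
Proof.
rewrite exchange_big /= -sumR_const; apply: sumR_le => x _.
rewrite -(bigA_distr_bigA (fun i b => 1 + C x i b / 5)) /= -prodR_const_ord.
apply: prodR_le => i _; rewrite big_bool /=.
by have := C_sum_le1 x i; have := C_ge0 x i true; have := C_ge0 x i false; lra.
Qed.

(* Convexity of exp, in the form exp t >= exp mu * (1 + (t - mu)). *)
Lemma sum_exp_index_score_ge (mu : R) :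
  INR #|bits| * mu <= \big[Rplus/0]_(a : bits) index_score a ->
  INR #|bits| * exp (mu / 6) <= \big[Rplus/0]_(a : bits) exp (index_score a / 6).
Proof.
move=> score_ge; have emu := exp_pos (mu / 6).
apply: (@Rle_trans _ (\big[Rplus/0]_(a : bits)
    (exp (mu / 6) * (1 - mu / 6) + exp (mu / 6) / 6 * index_score a))).
  rewrite big_split sumR_const -big_distrr /=.
  have := Rmult_le_compat_l (exp (mu / 6) / 6) _ _ ltac:(lra) score_ge.
  by set S := bigop _ _ _; set k := INR _; set e := exp _; nra.
apply: sumR_le => a _.
have -> : exp (index_score a / 6) = exp (mu / 6) * exp ((index_score a - mu) / 6).
  by rewrite -exp_plus; congr exp; field.
by have := exp_ineq1_le ((index_score a - mu) / 6); nra.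
Qed.

Lemma index_card_ge :
  INR #|bits| * (INR m * (2 / 3)) <= \big[Rplus/0]_(a : bits) index_score a ->
  (2 * exp (1 / 9)) ^ m <= INR #|X| * (11 / 5) ^ m.
Proof.
move=> /sum_exp_index_score_ge.
have -> : #|bits| = (2 ^ m)%N by rewrite card_ffun card_bool card_ord.
rewrite INR_expn /= Rpow_mult_distr.
have -> : exp (INR m * (2 / 3) / 6) = exp (1 / 9) ^ m.
  by rewrite -(Rpower_pow _ _ (exp_pos _)) /Rpower ln_exp; congr exp; field.
move=> H; apply: Rle_trans H _; apply: Rle_trans (sum_index_bonus_le).
by apply: sumR_le => a _; apply: exp_index_score_le.
Qed.

End IndexFixedCoin.
Arguments index_score {X m} d C a.
Arguments index_card_ge {X m d C}.

(* Taking logarithms: (11/5)^m = 2^m 1.1^m, 1/9 - ln 1.1 >= 1/90 and ln 2 < 1. *)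
Lemma bits_ge_of_card (m s : nat) :
  (2 * exp (1 / 9)) ^ m <= 2 ^ s * (11 / 5) ^ m -> INR m / 90 <= INR s.
Proof.
move=> H.
have pos1 : 0 < 2 * exp (1 / 9) by have := exp_pos (1 / 9); lra.
have := ln_le (pow_lt _ m pos1) H.
have q1 : 0 < 2 ^ s by apply: pow_lt; lra.
have q2 : 0 < (11 / 5) ^ m by apply: pow_lt; lra.
rewrite ln_mult // (ln_pow _ pos1) (ln_pow 2 ltac:(lra)) (ln_pow (11 / 5) ltac:(lra)).
rewrite ln_mult ?ln_exp; try lra.
have -> : 11 / 5 = 2 * (1 + 1 / 10) by field.
rewrite ln_mult; try lra.
have ln11 : ln (1 + 1 / 10) <= 1 / 10.
  rewrite -{2}(ln_exp (1 / 10)); apply: ln_le; [lra | exact: exp_ineq1_le].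
have ln2_lt1 : ln 2 < 1.
  rewrite -[X in _ < X](ln_exp 1); apply: ln_increasing; first lra.
  by have := exp_ineq1 1; lra.
have := ln_lt_2; have := pos_INR s; have := pos_INR m; nra.
Qed.

(* A public-coin one-way protocol for INDEX: coin w of weight p w, message
   distribution d w a for the bits a, and probability C w x i b that the
   receiver of message x, asked for index i, answers b. *)
Section IndexPublicCoin.
Variables (m s : nat) (W : finType).
Local Notation bits := {ffun 'I_m -> bool}.
Local Notation memory := 'I_(2 ^ s).
Variables (p : W -> R) (d : W -> bits -> memory -> R) (C : W -> memory -> 'I_m -> bool -> R).
Hypotheses (p_ge0 : forall w, 0 <= p w) (p_sum1 : \big[Rplus/0]_w p w = 1)
  (d_ge0 : forall w a x, 0 <= d w a x) (d_sum1 : forall w a, \big[Rplus/0]_x d w a x = 1)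
  (C_ge0 : forall w x i b, 0 <= C w x i b)
  (C_sum_le1 : forall w x i, C w x i true + C w x i false <= 1)
  (correct : forall a i,
     2 / 3 <= \big[Rplus/0]_w (p w * \big[Rplus/0]_x (d w a x * C w x i (a i)))).

Let total_score w := \big[Rplus/0]_(a : bits) index_score (d w) (C w) a.

Let mean_total_score_ge :
  INR #|bits| * (INR m * (2 / 3)) <= \big[Rplus/0]_w (p w * total_score w).
Proof.
have -> : \big[Rplus/0]_w (p w * total_score w) =
    \big[Rplus/0]_(a : bits) \big[Rplus/0]_(i < m)
      \big[Rplus/0]_w (p w * \big[Rplus/0]_x (d w a x * C w x i (a i))).
  transitivity (\big[Rplus/0]_w \big[Rplus/0]_(a : bits) \big[Rplus/0]_(i < m)
      (p w * \big[Rplus/0]_x (d w a x * C w x i (a i)))); last first.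
    by rewrite exchange_big /=; apply: eq_bigr => a _; rewrite exchange_big.
  apply: eq_bigr => w _; rewrite /total_score big_distrr /=.
  apply: eq_bigr => a _; rewrite /index_score -big_distrr /=; congr (_ * _).
  by under eq_bigr do rewrite big_distrr; rewrite exchange_big.
rewrite -sumR_const; apply: sumR_le => a _.
by rewrite -[X in INR X * _](card_ord m) -sumR_const; apply: sumR_le.
Qed.

Lemma index_lower_bound : INR m / 90 <= INR s.
Proof.
have [w1 _] : exists w1 : W, true.
  case: (pickP (fun _ : W => true)) => [w1 _|W0]; first by exists w1.
  by move: p_sum1; rewrite big_pred0 //; lra.
have [w0 Hw0] := exists_argmaxR w1 total_score.
apply: bits_ge_of_card; rewrite -[2 ^ s]/(INR 2 ^ s) -INR_expn -[(2 ^ s)%N]card_ord.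
apply: (index_card_ge (d_ge0 w0) (d_sum1 w0) (C_ge0 w0) (C_sum_le1 w0)).
exact: Rle_trans mean_total_score_ge (avgR_le_max p_ge0 p_sum1 Hw0).
Qed.

End IndexPublicCoin.

(** * Streams encoding INDEX *)

Section IndexStreams.
Context {m : nat}.
Local Notation bits := {ffun 'I_m -> bool}.

Definition bits_stream (y : nat) (a : bits) : seq (update m) :=
  [seq (j, Posz y) | j <- enum 'I_m & a j].

Definition index_stream (x y : nat) (a : bits) (i : 'I_m) : seq (update m) :=
  bits_stream y a ++ [:: (i, Posz x)].

Lemma freq_bits_stream y a j : freq (bits_stream y a) j = if a j then Posz y else 0%R.
Proof.
rewrite /freq /bits_stream big_map /= big_filter_cond big_enum_cond /=.
have [aj|naj] := boolP (a j).
  by rewrite (big_pred1 j) // => k /=; case: eqVneq => [->|]; rewrite ?aj ?andbF.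
by rewrite big_pred0 // => k /=; case: eqVneq => [->|]; rewrite ?(negbTE naj) ?andbF.
Qed.

Lemma freq_index_stream x y a i j :
  freq (index_stream x y a i) j =
  Posz ((if a j then y else 0) + (if i == j then x else 0))%N.
Proof.
rewrite /freq /index_stream big_cat /= -/(freq _ j) freq_bits_stream big_cons big_nil /=.
by case: (a j); case: (i == j) => /=; lia.
Qed.

Lemma turnstile_index_stream x y a i : turnstile (x + y) (index_stream x y a i).
Proof.
move=> k _ j; set D := index_stream x y a i.
have D_ge0 u : u \in D -> (0 <= u.2)%R.
  by rewrite mem_cat => /orP[/mapP[? _ ->]|]; rewrite // inE => /eqP ->.
have sum_ge0 r : {subset r <= D} -> (0 <= \sum_(u <- r | u.1 == j) u.2)%R.
  by move=> rD; rewrite big_seq_cond; apply: sumr_ge0 => u /andP[/rD/D_ge0].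
have freq_split : freq D j = (freq (take k D) j + \sum_(u <- drop k D | u.1 == j) u.2)%R.
  by rewrite /freq -big_cat cat_take_drop.
have le_take : (freq (take k D) j <= freq D j)%R.
  by rewrite freq_split lerDl sum_ge0 // => u /mem_drop.
have ge0_take : (0 <= freq (take k D) j)%R by apply: sum_ge0 => u /mem_take.
move: ge0_take le_take; rewrite freq_index_stream.
case: (freq (take k D) j) => // n.
by case: (a j); case: (i == j) => /=; lia.
Qed.

Lemma gsum_index_stream_bounds (h : nat -> R) x y (a : bits) i :
  h 0%N = 0 -> (forall n, 0 <= h n) ->
  h (x + (if a i then y else 0))%N <= gsum h (freq (index_stream x y a i)) <=
  h (x + (if a i then y else 0))%N + INR m * h y.
Proof.
move=> h0 h_ge0; rewrite /gsum (bigD1 i) //= freq_index_stream eqxx /= addnC.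
have other j : j != i -> 0 <= h (absz (freq (index_stream x y a i) j)) <= h y.
  move=> ji; rewrite freq_index_stream eq_sym (negbTE ji) addn0.
  by case: (a j) => /=; rewrite ?h0; split; try lra; apply: h_ge0.
split.
  rewrite -[X in X <= _]Rplus_0_r; apply: Rplus_le_compat_l.
  by apply: sumR_ge0 => j /other [].
apply: Rplus_le_compat_l; rewrite -[X in INR X * _](card_ord m) -sumR_const big_mkcond /=.
apply: sumR_le => j _; case: ifP => [/other []//|_]; exact: h_ge0.
Qed.

End IndexStreams.

Section OnePassRuns.
Context {n s : nat} {A : algorithm n s}.
Hypothesis validA : valid_alg A.
Local Notation memory := 'I_(2 ^ s).

Definition is_distr (d : memory -> R) := (forall t, 0 <= d t) /\ \big[Rplus/0]_t d t = 1.

Lemma run_pass_distr w k d D : is_distr d -> is_distr (run_pass A w k d D).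
Proof.
case: validA => _ [_ /(_ w) [_ [_ transA]]].
elim: D d => [|u D IH] d // [d_ge0 d_sum1]; apply: IH; split.
  move=> t; apply: sumR_ge0 => z _.
  by apply: Rmult_le_pos => //; apply: (transA k z u).1.
rewrite exchange_big /= -d_sum1; apply: eq_bigr => z _.
by rewrite -big_distrr /= (transA k z u).2 Rmult_1_r.
Qed.

Lemma init_distr w : is_distr (init A w).
Proof. by case: validA => _ [_ /(_ w) [? []]]. Qed.

Lemma run_one_pass_rcons w D u :
  run A w 1 (D ++ [:: u]) =
  fun t => \big[Rplus/0]_z (run_pass A w 0 (init A w) D z * trans A w 0 z u t).
Proof. by rewrite /run /= /run_pass foldl_cat. Qed.

End OnePassRuns.

Section IndexReduction.
Variables (m s x y : nat) (A : algorithm m s) (h : nat -> R) (eps : R) (decode : R -> bool).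
Local Notation bits := {ffun 'I_m -> bool}.
Local Notation gval a i := (gsum h (freq (index_stream x y a i))).
Hypotheses (validA : valid_alg A) (solvesA : solves_SUM A 1 h eps (x + y))
  (decodes : forall (a : bits) i o,
     (1 - eps) * gval a i <= o <= (1 + eps) * gval a i -> decode o = a i).

Let answer w z (i : 'I_m) b := \big[Rplus/0]_t
  (trans A w 0 z (i, Posz x) t * (if decode (output A w t) == b then 1 else 0)).

Lemma one_pass_index_lower_bound : INR m / 90 <= INR s.
Proof.
have [p_ge0 [p_sum1 validw]] := validA.
have trans_distr w z u : is_distr (trans A w 0 z u).
  by have [_ [_ /(_ 0%N z u) []]] := validw w.
have ind01 b o : 0 <= (if decode o == b then 1 else 0) <= 1 by case: ifP; lra.
have alice_distr w a : is_distr (run_pass A w 0 (init A w) (bits_stream y a)).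
  exact: run_pass_distr validA w 0%N _ (bits_stream y a) (init_distr validA w).
apply: (@index_lower_bound m s (seed A) (seed_w A)
  (fun w a => run_pass A w 0 (init A w) (bits_stream y a)) answer) => //.
- by move=> w a; apply: (alice_distr w a).1.
- by move=> w a; apply: (alice_distr w a).2.
- move=> w z i b; apply: sumR_ge0 => t _.
  by apply: Rmult_le_pos; [apply: (trans_distr w z _).1 | apply: (ind01 b _).1].
- move=> w z i; apply: Req_le.
  rewrite /answer -big_split /= -[RHS](trans_distr w z (i, Posz x)).2.
  by apply: eq_bigr => t _; rewrite -Rmult_plus_distr_l; case: decode => /=; lra.
move=> a i; apply: Rle_trans (solvesA _ (turnstile_index_stream x y a i)) _.
rewrite /prob_out_in; apply: sumR_le => w _; apply: Rmult_le_compat_l => //.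
rewrite /index_stream run_one_pass_rcons.
under [X in X <= _]eq_bigr => t _ do rewrite big_distrl /=.
rewrite exchange_big /=; apply: sumR_le => z _; rewrite /answer [X in _ <= X]big_distrr /=.
apply: sumR_le => t _; rewrite -Rmult_assoc; apply: Rmult_le_compat_l.
  by apply: Rmult_le_pos; [apply: (alice_distr w a).1 | apply: (trans_distr w z _).1].
destruct (Rle_dec _ _) as [lo|nlo]; last exact: (ind01 _ _).1.
destruct (Rle_dec _ _) as [hi|nhi]; last exact: (ind01 _ _).1.
by rewrite (decodes a i _ (conj lo hi)) eqxx /=; lra.
Qed.

End IndexReduction.
Arguments one_pass_index_lower_bound {m s x y A h eps decode}.

(** * Drops followed by jumps *)

Lemma Rpower_ge_of_root (a L x : R) :
  0 < a -> 0 < L -> Rpower L (/ a) <= x -> L <= Rpower x a.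
Proof.
move=> a0 L0 Lx.
have := Rle_Rpower_l _ _ a (Rlt_le _ _ a0) (conj (Rpower_gt0 L (/ a)) Lx).
by rewrite Rpower_mult Rinv_l ?Rpower_1 //; lra.
Qed.

Lemma floor_nat (r : R) : 0 <= r -> exists k : nat, INR k <= r < INR k + 1.
Proof.
move=> r0; have [up_gt up_le] := archimed r.
have up_pos : Z.lt 0 (up r) by apply: lt_IZR; lra.
exists (Z.to_nat (Z.sub (up r) 1)).
by rewrite INR_IZR_INZ Z2Nat.id ?minus_IZR; [lra | lia].
Qed.

Lemma nat_eventually_ge (X : R) : exists K : nat, forall k : nat, (K <= k)%N -> X <= INR k.
Proof.
have [K [_ KX]] := floor_nat (Rmax X 0) (Rmax_r X 0).
exists K.+1 => k /leP /le_INR; rewrite S_INR; have := Rmax_l X 0; lra.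
Qed.

Lemma subpolyR_const {c : R} : 0 < c -> subpolyR (fun _ => c).
Proof.
move=> c0; split=> [x _|al al0]; first lra.
split=> [B|e e0].
  exists (Rpower (Rabs B / c + 1) (/ al)) => x Xx x0 /=.
  have Bc : 0 <= Rabs B / c.
    by apply: Rmult_le_pos; [exact: Rabs_pos | exact/Rlt_le/Rinv_0_lt_compat].
  have := Rpower_ge_of_root al (Rabs B / c + 1) x al0 ltac:(lra) Xx.
  move=> /(Rmult_le_compat_r c _ _ (Rlt_le _ _ c0)).
  have -> : (Rabs B / c + 1) * c = Rabs B + c by field; lra.
  by have := Rle_abs B; lra.
exists (Rpower (c / e + 1) (/ al)) => x Xx x0 /=.
have ce : 0 < c / e by apply: Rdiv_lt_0_compat.
have xal := Rpower_ge_of_root al (c / e + 1) x al0 ltac:(lra) Xx.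
have p0 := Rpower_gt0 x al.
rewrite Rpower_Ropp Rabs_right; last first.
  by apply/Rle_ge/Rmult_le_pos; [exact/Rlt_le/Rinv_0_lt_compat | lra].
apply: (Rmult_lt_reg_l (Rpower x al)) => //.
rewrite -Rmult_assoc Rinv_r; last lra.
have := Rmult_lt_compat_l e (c / e) (Rpower x al) e0 ltac:(lra).
have -> : e * (c / e) = c by field; lra.
nra.
Qed.

Lemma bbS_const {c : R} : 0 < c -> bbS (fun _ => c).
Proof.
move=> c0; split=> [|*]; last lra.
split=> [x|al al0]; first lra.
have [_ /(_ al al0) [lower upper]] := subpolyR_const c0.
split=> [B|e e0].
  have [X HX] := lower B; have [K HK] := nat_eventually_ge X.
  by exists K => x Kx x0; apply: HX; [exact: HK | exact/lt_0_INR/ltP].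
have [X HX] := upper e e0; have [K HK] := nat_eventually_ge X.
by exists K => x Kx x0; apply: HX; [exact: HK | exact/lt_0_INR/ltP].
Qed.

Definition jump_eps (th : R) := th / (4 * (1 + th)).

Lemma jump_eps_bounds {th} : 0 < th ->
  let e := jump_eps th in
  [/\ 0 < e, e < 1 / 4, (1 + e) * (1 + e) < (1 - e) * (1 + th)
    & (1 + e) * (1 + e * (1 + th)) < (1 - e) * (1 + th)].
Proof.
move=> th0 e; have e_def : e * (4 * (1 + th)) = th by rewrite /e /jump_eps; field; lra.
have e0 : 0 < e by apply: Rdiv_lt_0_compat; lra.
by split=> //; nra.
Qed.

Definition above (T o : R) : bool := if Rlt_dec T o then true else false.

Section JumpDecoder.
Variables (h : nat -> R) (m x y : nat) (th : R).
Local Notation e := (jump_eps th).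
Local Notation gval a i := (gsum h (freq (@index_stream m x y a i))).
Hypotheses (th0 : 0 < th) (h0 : h 0%N = 0) (h_ge0 : forall n, 0 <= h n) (hx0 : 0 < h x)
  (small_tail : INR m * h y <= e * h x).

Lemma index_decoder_of_jump_up : (1 + th) * h x <= h (x + y)%N ->
  forall (a : {ffun 'I_m -> bool}) i o,
    (1 - e) * gval a i <= o <= (1 + e) * gval a i -> above ((1 + e) * (1 + e) * h x) o = a i.
Proof.
move=> jump a i o [lo hi]; have [e0 e14 up _] := jump_eps_bounds th0.
have [gl gu] := gsum_index_stream_bounds h x y a i h0 h_ge0.
rewrite /above; case: (a i) gl gu => /= gl gu; rewrite ?addn0 in gl gu.
  have := Rmult_lt_compat_r (h x) _ _ hx0 up.
  have := Rmult_le_compat_l (1 - e) _ _ ltac:(lra) (Rle_trans _ _ _ jump gl).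
  by move=> ? ?; destruct (Rlt_dec _ _) => //; exfalso; nra.
have := Rmult_le_compat_l (1 + e) (gval a i) (h x + e * h x) ltac:(lra) ltac:(lra).
by move=> ?; destruct (Rlt_dec _ _) => //; exfalso; nra.
Qed.

Lemma index_decoder_of_jump_down : (1 + th) * h (x + y)%N <= h x ->
  forall (a : {ffun 'I_m -> bool}) i o,
    (1 - e) * gval a i <= o <= (1 + e) * gval a i ->
    ~~ above ((1 + e) * (h (x + y)%N + e * h x)) o = a i.
Proof.
move=> jump a i o [lo hi]; have [e0 e14 _ down] := jump_eps_bounds th0.
have [gl gu] := gsum_index_stream_bounds h x y a i h0 h_ge0.
rewrite /above; case: (a i) gl gu => /= gl gu; rewrite ?addn0 in gl gu.
  have := Rmult_le_compat_l (1 + e) (gval a i) (h (x + y)%N + e * h x) ltac:(lra) ltac:(lra).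
  by move=> ?; destruct (Rlt_dec _ _) => //; exfalso; nra.
have := Rmult_lt_compat_r (h x) _ _ hx0 down.
have := Rmult_le_compat_l (1 - e) _ _ ltac:(lra) gl.
have := Rmult_le_compat_l (1 + e) _ _ ltac:(lra) jump.
by move=> ? ? ?; destruct (Rlt_dec _ _) => //; exfalso; nra.
Qed.

End JumpDecoder.
Arguments index_decoder_of_jump_up {h m x y th}.
Arguments index_decoder_of_jump_down {h m x y th}.

(* The exponent al / (2 (1 + al)) turns (Y^al * Y)^_ into Y^(al/2) = o(Y^al). *)
Lemma index_size_asymptotics {al e : R} : 0 < al -> 0 < e ->
  exists Y0, forall Y, Y0 <= Y ->
    1 <= e * Rpower Y al /\
    90 * Rpower (2 * (e * Rpower Y al) * Y) (al / (2 * (1 + al))) <= e * Rpower Y al - 1.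
Proof.
move=> al0 e0; set be := al / (2 * (1 + al)); set K := Rpower (2 * e) be.
have K0 : 0 < K by apply: Rpower_gt0.
set U := Rmax 1 ((90 * K + 1) / e).
have U1 : 1 <= U by apply: Rmax_l.
have U2 : (90 * K + 1) / e <= U by apply: Rmax_r.
exists (Rpower U (/ (al / 2))) => Y Y0Y.
have Y0 : 0 < Y by have := Rpower_gt0 U (/ (al / 2)); lra.
have Uu : U <= Rpower Y (al / 2) by apply: Rpower_ge_of_root => //; lra.
set u := Rpower Y (al / 2) in Uu.
have Yal : Rpower Y al = u * u by rewrite /u -Rpower_plus; congr Rpower; field.
have YalY : Rpower (2 * (e * Rpower Y al) * Y) be = K * u.
  have -> : 2 * (e * Rpower Y al) * Y = (2 * e) * (Rpower Y al * Rpower Y 1).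
    by rewrite Rpower_1 //; ring.
  rewrite -Rpower_plus -Rpower_mult_distr; [|lra|exact: Rpower_gt0].
  by rewrite Rpower_mult /u /K; congr (_ * Rpower _ _); rewrite /be; field; lra.
have Ku : 90 * K + 1 <= e * u.
  have : (90 * K + 1) / e * e = 90 * K + 1 by field; lra.
  nra.
rewrite YalY Yal; split; nra.
Qed.

Definition drop_jump_pairs (h : nat -> R) (al th : R) : Prop :=
  forall N : R, exists x y : nat,
    [/\ (x < y)%N, N <= INR y, h y * Rpower (INR y) al <= h x
      & (1 + th) * h x <= h (x + y)%N \/ (1 + th) * h (x + y)%N <= h x].

Lemma subpolyR_lt_Rpower {f : R -> R} (be : R) : subpolyR f -> 0 < be ->
  exists X, forall t, X <= t -> 0 < t -> f t < Rpower t be.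
Proof.
move=> [_ sub] be0; have [_ /(_ 1 Rlt_0_1) [X HX]] := sub be be0.
exists X => t Xt t0; have := HX t Xt t0; rewrite Rpower_Ropp => small.
have tbe0 := Rpower_gt0 t be.
have q : / Rpower t be * f t < 1 by have := Rle_abs (/ Rpower t be * f t); lra.
have := Rmult_lt_compat_l (Rpower t be) _ _ tbe0 q.
by rewrite -Rmult_assoc Rinv_r; lra.
Qed.

Lemma one_pass_bits_of_jump {h : nat -> R} {th : R} {m s x y : nat} {A : algorithm m s} :
  h 0%N = 0 -> (forall n, 0 <= h n) -> 0 < th -> 0 < h x ->
  INR m * h y <= jump_eps th * h x ->
  (1 + th) * h x <= h (x + y)%N \/ (1 + th) * h (x + y)%N <= h x ->
  valid_alg A -> solves_SUM A 1 h (jump_eps th) (x + y) -> INR m / 90 <= INR s.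
Proof.
move=> h0 h_ge0 th0 hx0 small_tail [] jump validA solvesA.
  exact: one_pass_index_lower_bound validA solvesA
    (index_decoder_of_jump_up th0 h0 h_ge0 hx0 small_tail jump).
exact: one_pass_index_lower_bound validA solvesA
  (index_decoder_of_jump_down th0 h0 h_ge0 hx0 small_tail jump).
Qed.

(* With m ~ e y^al coordinates, n M = m (x + y) <= 2 m y, so the allowed space
   hstar (n M) < (n M)^(al / (2 (1 + al))) ~ y^(al/2) is below the m / 90 bits. *)
Lemma not_tractable_of_drop_jump_pairs (h : nat -> R) (al th : R) :
  inG h -> 0 < al -> 0 < th -> drop_jump_pairs h al th -> ~ tractable 1 h.
Proof.
move=> [h0 [_ h_gt0]] al0 th0 pairs tract.
have h_ge0 n : 0 <= h n by case: n => [|n]; [rewrite h0; lra | exact/Rlt_le/h_gt0].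
set e := jump_eps th; have [e0 _ _ _] := jump_eps_bounds th0.
have [hstar [hstar_subpoly solvable]] :=
  tract (fun _ => / e) (subpolyR_const (Rinv_0_lt_compat _ e0)) (fun _ _ => e)
    (fun _ _ _ _ => ltac:(rewrite Rinv_inv; lra)).
set be := al / (2 * (1 + al)).
have be0 : 0 < be by apply: Rdiv_lt_0_compat; lra.
have [X hstar_small] := subpolyR_lt_Rpower be hstar_subpoly be0.
have [Y0 HY0] := index_size_asymptotics al0 e0.
have [x [y [xy Ny drop jump]]] := pairs (Rmax (Rmax X Y0) 1).
set Y := INR y in Ny drop.
have [XY Y0Y Y1] : [/\ X <= Y, Y0 <= Y & 1 <= Y].
  by have := Rmax_l (Rmax X Y0) 1; have := Rmax_r (Rmax X Y0) 1;
     have := Rmax_l X Y0; have := Rmax_r X Y0; split; lra.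
have [r1 r_bits] := HY0 Y Y0Y; set r := e * Rpower Y al in r1 r_bits.
have [m [mr rm]] := floor_nat r ltac:(lra).
have m0 : (0 < m)%N by case: m mr rm => //= *; lra.
have hy0 := h_gt0 y (leq_ltn_trans (leq0n x) xy).
have Yal0 := Rpower_gt0 Y al.
have hx0 : 0 < h x by nra.
have small_tail : INR m * h y <= e * h x.
  apply: (@Rle_trans _ (r * h y)); first by apply: Rmult_le_compat_r; lra.
  by have := Rmult_le_compat_l e _ _ (Rlt_le _ _ e0) drop; rewrite /r; nra.
have [s [s_le [A [validA solvesA]]]] := solvable m (x + y)%N m0 ltac:(lia).
have := one_pass_bits_of_jump h0 h_ge0 th0 hx0 small_tail jump validA solvesA.
set t := INR (m * (x + y)) in s_le.
have [tY tr] : Y <= t <= 2 * r * Y.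
  have := lt_INR _ _ (elimT ltP xy); have := pos_INR x.
  have : 1 <= INR m by rewrite -INR_1; apply/le_INR/leP.
  by rewrite /t mult_INR plus_INR -/Y; split; nra.
have := hstar_small t ltac:(lra) ltac:(lra).
have := Rle_Rpower_l t (2 * r * Y) be (Rlt_le _ _ be0) ltac:(lra).
rewrite -/be in r_bits; lra.
Qed.

Lemma normal_of_drop_jump_pairs (h : nat -> R) (al th : R) :
  inG h -> 0 < al -> 0 < th -> drop_jump_pairs h al th -> normal bbS h.
Proof.
move=> [_ [_ h_gt0]] al0 th0 pairs [_ near].
have [N1 [_ HN1]] := near al al0 (fun _ => th / 2) (@bbS_const (th / 2) ltac:(lra)).
have [x [y [xy N1y drop jump]]] := pairs N1.
have y0 : (0 < y)%N by apply: leq_ltn_trans xy.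
have Yal0 := Rpower_gt0 (INR y) al.
have hx0 : 0 < h x by have := h_gt0 y y0; nra.
have hxy0 : 0 < h (x + y)%N by apply: h_gt0; lia.
have period : is_period h al y.
  exists x; split => //; apply: (Rmult_le_reg_r (Rpower (INR y) al)) => //.
  by have -> : h x / Rpower (INR y) al * Rpower (INR y) al = h x by field; lra.
have close := HN1 y period N1y x xy drop.
have := Rmult_le_compat_r (th / 2) _ _ ltac:(lra) (Rmin_l (h x) (h (x + y)%N)).
have := Rmult_le_compat_r (th / 2) _ _ ltac:(lra) (Rmin_r (h x) (h (x + y)%N)).
have := Rmult_lt_0_compat _ _ th0 hx0; have := Rmult_lt_0_compat _ _ th0 hxy0.
by case: jump => jump *; [rewrite Rabs_right in close | rewrite Rabs_left1 in close]; lra.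
Qed.

(** * Perturbing a nearly periodic function *)

Section Perturbation.
Variables (g : nat -> R) (al delta : R).
Hypotheses (g_inG : inG g) (delta0 : 0 < delta)
  (drops : forall N, 0 < N -> exists x y : nat,
     (x < y)%N /\ N <= INR y /\ g y <= g x / Rpower (INR y) al).

Let g_gt0 : forall x, (0 < x)%N -> 0 < g x := g_inG.2.2.

Definition drop_pair_beyond (N : nat) (p : nat * nat) : Prop :=
  [/\ (p.1 < p.2)%N, INR N + 1 <= INR p.2 & g p.2 <= g p.1 / Rpower (INR p.2) al].

Lemma exists_drop_pair_beyond N : exists p, drop_pair_beyond N p.
Proof.
have [x [y [xy [Ny drop]]]] := drops (INR N + 1) ltac:(have := pos_INR N; lra).
by exists (x, y).
Qed.

Definition drop_pair_from (N : nat) : nat * nat :=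
  proj1_sig (constructive_indefinite_description _ (exists_drop_pair_beyond N)).

Lemma drop_pair_fromP N : drop_pair_beyond N (drop_pair_from N).
Proof. exact: proj2_sig (constructive_indefinite_description _ _). Qed.

(* Each y exceeds the previous x + y, so the points x + y increase strictly and
   never coincide with any y. *)
Fixpoint drop_pair (k : nat) : nat * nat :=
  if k is k'.+1 then drop_pair_from ((drop_pair k').1 + (drop_pair k').2)
  else drop_pair_from 0.

Local Notation xx k := (drop_pair k).1.
Local Notation yy k := (drop_pair k).2.
Local Notation zz k := (xx k + yy k)%N.

Lemma drop_pairP k : exists N, drop_pair_beyond N (drop_pair k).
Proof. by case: k => [|k]; eexists; apply: drop_pair_fromP. Qed.

Lemma xx_lt_yy k : (xx k < yy k)%N.
Proof. by have [N []] := drop_pairP k. Qed.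

Lemma drop_pair_drop k : g (yy k) * Rpower (INR (yy k)) al <= g (xx k).
Proof.
have [N [_ _ drop]] := drop_pairP k; have Yal0 := Rpower_gt0 (INR (yy k)) al.
have := Rmult_le_compat_r (Rpower (INR (yy k)) al) _ _ (Rlt_le _ _ Yal0) drop.
by rewrite /Rdiv Rmult_assoc Rinv_l ?Rmult_1_r //; lra.
Qed.

Lemma xx_gt0 k : (0 < xx k)%N.
Proof.
have y0 : (0 < yy k)%N by apply: leq_ltn_trans (xx_lt_yy k).
case E: (xx k) => [|//]; have := drop_pair_drop k; rewrite E g_inG.1.
by have := Rpower_gt0 (INR (yy k)) al; have := g_gt0 _ y0; nra.
Qed.

Lemma zz_lt_yy_succ k : (zz k < yy k.+1)%N.
Proof.
have [_ + _] : drop_pair_beyond (zz k) (drop_pair k.+1) by exact: drop_pair_fromP.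
by rewrite -S_INR => /INR_le/leP.
Qed.

Lemma yy_lt_zz k : (yy k < zz k)%N.
Proof. by rewrite -{1}[yy k]add0n ltn_add2r xx_gt0. Qed.

Lemma zz_lt_succ k : (zz k < zz k.+1)%N.
Proof. exact: ltn_trans (zz_lt_yy_succ k) (yy_lt_zz k.+1). Qed.

Lemma zz_increasing : {homo (fun k => zz k) : j k / (j < k)%N}.
Proof. exact: homo_ltn ltn_trans zz_lt_succ. Qed.

Lemma zz_nondecreasing {j k} : (j <= k)%N -> (zz j <= zz k)%N.
Proof. by rewrite leq_eqVlt => /predU1P[->|/zz_increasing/ltnW]. Qed.

Lemma zz_ge k : (k <= zz k)%N.
Proof. by elim: k => // k IH; apply: leq_ltn_trans IH (zz_lt_succ k). Qed.

Lemma zz_gt1 k : (1 < zz k)%N.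
Proof. by have := xx_gt0 k; have := xx_lt_yy k; lia. Qed.

Lemma yy_neq_zz j k : yy k != zz j.
Proof.
rewrite neq_ltn; case: (ltnP j k) => [jk|kj].
  case: k jk => // k /[!ltnS] jk; apply/orP; right.
  exact: leq_ltn_trans (zz_nondecreasing jk) (zz_lt_yy_succ k).
by rewrite (leq_trans (yy_lt_zz k)) ?zz_nondecreasing.
Qed.

Local Notation eta := (delta / 4).

Definition jump_factor (hx gz : R) : R :=
  if Rlt_dec (exp (- eta) * hx) gz then
    if Rlt_dec gz (exp eta * hx) then exp delta else 1
  else 1.

(* The factor at zz k is chosen knowing the factor already fixed at xx k < zz k. *)
Fixpoint factor_upto (n : nat) : nat -> R :=
  if n is k.+1 then fun z =>
    if z == zz k then jump_factor (g (xx k) * factor_upto k (xx k)) (g (zz k))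
    else factor_upto k z
  else fun _ => 1.

Definition perturbation (z : nat) : R := factor_upto z.+1 z.

Definition perturbed (z : nat) : R := g z * perturbation z.

Lemma factor_upto_1_or_exp n z : factor_upto n z = 1 \/ factor_upto n z = exp delta.
Proof.
elim: n z => [|n IH] z /=; first by left.
case: ifP => _; last exact: IH.
by rewrite /jump_factor; destruct (Rlt_dec _ _); [destruct (Rlt_dec _ _)|]; auto.
Qed.

Lemma factor_upto_miss n z : (forall j, (j < n)%N -> zz j != z) -> factor_upto n z = 1.
Proof.
elim: n => //= n IH miss; rewrite eq_sym (negbTE (miss n (ltnSn n))).
by apply: IH => j jn; apply: miss; apply: ltnW.
Qed.

Lemma factor_upto_stable n n' z : (n <= n')%N ->
  (forall j, (n <= j < n')%N -> zz j != z) -> factor_upto n' z = factor_upto n z.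
Proof.
elim: n' => [|n' IH]; first by rewrite leqn0 => /eqP ->.
rewrite leq_eqVlt => /predU1P[-> //|]; rewrite ltnS => nn' miss /=.
rewrite eq_sym (negbTE (miss n' _)) ?nn' ?ltnSn //.
by apply: IH => // j /andP[nj jn']; apply: miss; rewrite nj ltnS ltnW.
Qed.

Lemma factor_upto_perturbation n z :
  (forall j, (n <= j)%N -> zz j != z) -> factor_upto n z = perturbation z.
Proof.
move=> miss; rewrite /perturbation; case: (leqP n z.+1) => nz.
  by symmetry; apply: factor_upto_stable => // j /andP[/miss].
apply: factor_upto_stable => [|j /andP[zj _]]; first exact: ltnW.
by rewrite neq_ltn (leq_trans zj (zz_ge j)) orbT.
Qed.

Lemma perturbation_1_or_exp z : perturbation z = 1 \/ perturbation z = exp delta.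
Proof. exact: factor_upto_1_or_exp. Qed.

Lemma perturbation_ge1 z : 1 <= perturbation z.
Proof. by case: (perturbation_1_or_exp z) => ->; have := exp_ineq1_le delta; lra. Qed.

Lemma perturbation_yy k : perturbation (yy k) = 1.
Proof. by apply: factor_upto_miss => j _; rewrite eq_sym yy_neq_zz. Qed.

Lemma perturbation_zz k :
  perturbation (zz k) = jump_factor (perturbed (xx k)) (g (zz k)).
Proof.
have later_zz j : (k < j)%N -> zz j != zz k.
  by move=> /zz_increasing kj; rewrite neq_ltn kj orbT.
rewrite -(factor_upto_perturbation k.+1) // /= eqxx /perturbed.
rewrite (factor_upto_perturbation k) // => j kj.
have xz := ltn_trans (xx_lt_yy k) (yy_lt_zz k).
by rewrite neq_ltn (leq_trans xz (zz_nondecreasing kj)) orbT.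
Qed.

Lemma perturbed_gt0 {z} : (0 < z)%N -> 0 < perturbed z.
Proof.
by move=> z0; have := perturbation_ge1 z; have := g_gt0 _ z0; rewrite /perturbed; nra.
Qed.

Lemma perturbed_inG : inG perturbed.
Proof.
split; first by rewrite /perturbed g_inG.1 Rmult_0_l.
split; last by move=> z; apply: perturbed_gt0.
rewrite /perturbed g_inG.2.1 /perturbation factor_upto_miss ?Rmult_1_r // => j _.
by rewrite neq_ltn zz_gt1 orbT.
Qed.

Lemma perturbed_Theta_le : Theta_le g perturbed delta.
Proof.
move=> z z0; have gz := g_gt0 _ z0; rewrite /perturbed.
case: (perturbation_1_or_exp z) => ->.
  by rewrite Rmult_1_r Rminus_diag Rabs_R0; lra.
by rewrite ln_mult ?ln_exp ?Rabs_left1; try lra; exact: exp_pos.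
Qed.

Lemma perturbed_drop k : perturbed (yy k) * Rpower (INR (yy k)) al <= perturbed (xx k).
Proof.
rewrite /perturbed perturbation_yy Rmult_1_r; apply: Rle_trans (drop_pair_drop k) _.
by have := g_gt0 _ (xx_gt0 k); have := perturbation_ge1 (xx k); nra.
Qed.

Lemma perturbed_jump k :
  exp eta * perturbed (xx k) <= perturbed (zz k) \/
  exp eta * perturbed (zz k) <= perturbed (xx k).
Proof.
have pz : perturbed (zz k) = g (zz k) * jump_factor (perturbed (xx k)) (g (zz k)).
  by rewrite /perturbed perturbation_zz.
rewrite pz; move: (perturbed (xx k)) (perturbed_gt0 (xx_gt0 k)) => p p0.
have e_eta := exp_pos eta; have e_delta := exp_pos delta.
have inv_eta : exp eta * exp (- eta) = 1 by rewrite -exp_plus Rplus_opp_r exp_0.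
rewrite /jump_factor; destruct (Rlt_dec _ _) as [lo|lo]; rewrite /=; last first.
  have low := Rmult_le_compat_l (exp eta) _ _ (Rlt_le _ _ e_eta) (Rnot_lt_le _ _ lo).
  by rewrite -Rmult_assoc inv_eta in low; right; lra.
destruct (Rlt_dec _ _) as [hi|hi]; rewrite /=; last by left; have := Rnot_lt_le _ _ hi; lra.
left; have : exp eta <= exp (- eta) * exp delta by rewrite -exp_plus; apply: exp_le; lra.
move=> /(Rmult_le_compat_r p _ _ (Rlt_le _ _ p0)).
by have := Rmult_lt_compat_l (exp delta) _ _ e_delta lo; nra.
Qed.

Lemma perturbed_drop_jump_pairs : drop_jump_pairs perturbed al (exp eta - 1).
Proof.
move=> N; have [K KN] := nat_eventually_ge N.
exists (xx K), (yy K); split.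
- exact: xx_lt_yy.
- by apply: KN; case: K => // K; apply: leq_ltn_trans (zz_ge K) (zz_lt_yy_succ K).
- exact: perturbed_drop.
- by rewrite Rplus_minus; apply: perturbed_jump.
Qed.

End Perturbation.

Theorem theorem64 (g : nat -> R) :
  inG g -> nearly_periodic bbS g ->
  forall delta : R, Rlt 0 delta ->
  exists h : nat -> R,
    inG h /\ normal bbS h /\ ~ tractable 1 h /\ Theta_le g h delta.
Proof.
move=> g_inG [[al [al0 drops]] _] delta delta0.
have h_inG := perturbed_inG _ _ _ g_inG delta0 drops.
have pairs := perturbed_drop_jump_pairs _ _ _ g_inG delta0 drops.
have th0 : 0 < exp (delta / 4) - 1 by have := exp_ineq1 (delta / 4); lra.
exists (perturbed g al delta drops); split=> //; split.
  exact: normal_of_drop_jump_pairs h_inG al0 th0 pairs.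
split; first exact: not_tractable_of_drop_jump_pairs h_inG al0 th0 pairs.
exact: perturbed_Theta_le.
Qed.
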